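(* Let $\tau\in(V_{j-1},V_j)$ for some $1\le j\le n$, and $\chi\in\mathbb R$. If $i\ne j$ is an index with $\beta_i\neq\pm1$, then there is no $z_0\in[e^{V_{i-1}},e^{V_i}]$ such that $\lim_{z\to z_0} zS'_{\tau,\chi}(z)=0$ (limit taken over $z\in\mathbb C\setminus\mathbb R$).
   Context: Let $V_0<V_1<\dots<V_n$, $\beta_1,\dots,\beta_n\in[-1,1]$, $\beta_0:=-1$, $\beta_{n+1}:=1$, with $\beta_i\ne\beta_{i+1}$ for all $0\le i\le n$. Let $V:[V_0,V_n]\to\mathbb R$ be continuous and linear with slope $\beta_i$ on $[V_{i-1},V_i]$. For $\tau\in[V_0,V_n]$, $\chi\in\mathbb R$ and $z\in\mathbb C\setminus\mathbb R$ define $$S_{\tau,\chi}(z)=\int_{V_0}^{\tau}\tfrac12(1+V'(M))\ln(1-e^{M}z^{-1})\,dM-\int_{\tau}^{V_n}\tfrac12(1-V'(M))\ln(1-e^{-M}z)\,dM-\big(\chi-\tfrac12V(\tau)\big)\ln z,$$ with $\ln$ the principal branch. *)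

From Stdlib Require Import Reals.
From Coquelicot Require Import Coquelicot.

Open Scope R_scope.

Definition Carg (z : C) : R :=
  if Rle_dec 0 (Im z) then acos (Re z / Cmod z) else - acos (Re z / Cmod z).

Definition Cln (z : C) : C := (ln (Cmod z), Carg z).

(* S_{tau,chi}(z) for breakpoints Vs 0 < ... < Vs n and the
   piecewise-linear function Vf (its derivative is taken with Coquelicot's
   Derive; it is only undefined at finitely many points, which does not
   affect the Riemann integrals). *)
Definition S_fun (Vs : nat -> R) (n : nat) (Vf : R -> R) (tau chi : R) (z : C) : C :=
  (@RInt C_R_CompleteNormedModule (fun M => (RtoC (/2 * (1 + Derive Vf M))%R * Cln (1 - RtoC (exp M) / z))%C : C)
        (Vs 0%nat) tau
   - @RInt C_R_CompleteNormedModule (fun M => (RtoC (/2 * (1 - Derive Vf M))%R * Cln (1 - RtoC (exp (- M)) * z))%C : C)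
        tau (Vs n)
   - RtoC (chi - /2 * Vf tau)%R * Cln z)%C.

From Stdlib Require Import Reals Lra Lia Psatz List.
From Coquelicot Require Import Coquelicot.
Open Scope R_scope.

(* Write [z = x + iy] with [y > 0] small.  Since [Arg (1 - e^M / z) = Arg (z - e^M) - Arg z] and
   [Arg (1 - e^-M z) = Arg (z - e^M) - PI], the difference [Im S (x1 + iy) - Im S (x2 + iy)] is,
   up to [O(y)], the integral of the weights [(1 + V')/2] (below [tau]) and [-(1 - V')/2] (above
   [tau]) against the angle under which the segment [[x1 + iy, x2 + iy]] is seen from [e^M].  As
   [y -> 0] this angle tends to [PI] for [x1 < e^M < x2] and to [0] otherwise.  On
   [(V_(i-1), V_i)], which lies on one side of [tau] since [i <> j], the relevant weight is the
   constant [(1 +- beta_i)/2 > 0], so [Im S] jumps by at least a fixed multiple of [ln (x2 / x1)]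
   across any [[x1, x2]] inside [[e^V_(i-1), e^V_i]].  If [z S'(z) -> 0] at [z0], then [S'] is
   small near [z0], and the mean value theorem along horizontal segments rules out such jumps. *)

Lemma exp_le a b : a <= b -> exp a <= exp b.
Proof. intros [H | ->]; [left; now apply exp_increasing | apply Rle_refl]. Qed.

Lemma exp_sub_le a b q : a <= b <= q -> exp b - exp a <= exp q * (b - a).
Proof.
  intros H. replace a with (b + (a - b)) at 1 by ring. rewrite exp_plus.
  pose proof (exp_ineq1_le (a - b)). pose proof (exp_pos b). pose proof (exp_le b q (proj2 H)).
  nra.
Qed.

Lemma log_interval_near p q z0 del : p < q -> exp p <= z0 <= exp q -> 0 < del ->
  exists lo hi, p <= lo /\ lo < hi /\ hi <= q /\ z0 - del < exp lo /\ exp hi < z0 + del.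
Proof.
  intros Hpq Hz Hdel.
  pose proof (exp_increasing p q Hpq). pose proof (exp_pos p).
  set (l := Rmax (exp p) (z0 - del / 2)). set (h := Rmin (exp q) (z0 + del / 2)).
  assert (Hl : exp p <= l /\ z0 - del / 2 <= l) by (split; [apply Rmax_l | apply Rmax_r]).
  assert (Hh : h <= exp q /\ h <= z0 + del / 2) by (split; [apply Rmin_l | apply Rmin_r]).
  assert (Hlh : l < h) by (apply Rmax_lub_lt; apply Rmin_glb_lt; lra).
  exists (ln l), (ln h).
  rewrite !exp_ln by lra.
  repeat split; try lra.
  - rewrite <- (ln_exp p). apply ln_le; lra.
  - apply ln_increasing; lra.
  - rewrite <- (ln_exp q). apply ln_le; lra.
Qed.

Lemma small_pos_exists del e C : 0 < del -> 0 < e -> exists y, 0 < y < del /\ y * C <= e.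
Proof.
  intros Hdel He. pose proof (Rabs_pos C). pose proof (Rle_abs C).
  set (y := Rmin (del / 2) (e / (Rabs C + 1))).
  assert (Hy : 0 < y) by (apply Rmin_glb_lt; [|apply Rdiv_lt_0_compat]; lra).
  assert (Hyd : y <= del / 2) by apply Rmin_l.
  assert (Hye : y * (Rabs C + 1) <= e).
  { replace e with (e / (Rabs C + 1) * (Rabs C + 1)) by (field; lra).
    apply Rmult_le_compat_r; [lra | apply Rmin_r]. }
  exists y. split; [lra | nra].
Qed.

Lemma Rmult_le_unit_l w g B : 0 <= w <= 1 -> 0 <= g -> g <= B -> w * g <= B.
Proof. intros. nra. Qed.

(** * Arctangent and argument *)

Lemma atan_le a b : a <= b -> atan a <= atan b.
Proof.
  intros [Hlt | ->]; [left; now apply atan_increasing | apply Rle_refl].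
Qed.

Lemma atan_le_id t : 0 <= t -> atan t <= t.
Proof.
  intros [Ht | <-]; [|rewrite atan_0; apply Rle_refl].
  destruct (MVT_cor2 (fun x => x - atan x) (fun x => 1 - /(1 + x^2)) 0 t Ht)
    as [c [Hc _]].
  - intros c _. apply derivable_pt_lim_minus;
      [apply derivable_pt_lim_id | apply derivable_pt_lim_atan].
  - rewrite atan_0 in Hc.
    assert (/(1 + c^2) <= 1).
    { rewrite <- Rinv_1. apply Rinv_le_contravar; nra. }
    nra.
Qed.

(* [tan (PI/2 - (atan a - atan b)) = (1 + a b) / (a - b)], and the angle lies in (-PI/2, PI/2). *)
Lemma atan_sub_atan a b : b < a -> atan a - atan b = PI/2 - atan ((1 + a*b) / (a - b)).
Proof.
  intros Hba.
  set (t := PI/2 - (atan a - atan b)).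
  assert (Hab : atan b < atan a) by now apply atan_increasing.
  pose proof (atan_bound a); pose proof (atan_bound b).
  assert (Ht : - (PI/2) < t < PI/2) by (unfold t; lra).
  assert (Hsa : 0 < sqrt (1 + a²)) by (apply sqrt_lt_R0; unfold Rsqr; nra).
  assert (Hsb : 0 < sqrt (1 + b²)) by (apply sqrt_lt_R0; unfold Rsqr; nra).
  assert (Htan : tan t = (1 + a*b) / (a - b)).
  { unfold tan, t. rewrite sin_shift, cos_shift, cos_minus, sin_minus, !cos_atan, !sin_atan.
    field. lra. }
  rewrite <- Htan, atan_tan by exact Ht. unfold t. ring.
Qed.

Lemma acos_div_Cmod a b : 0 < b -> acos (a / sqrt (a^2 + b^2)) = PI/2 - atan (a/b).
Proof.
  intros Hb.
  set (s := sqrt (a^2 + b^2)).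
  assert (Hs2 : s * s = a^2 + b^2) by (apply sqrt_sqrt; nra).
  assert (Hs : 0 < s) by (apply sqrt_lt_R0; nra).
  assert (Has : -1 < a / s < 1).
  { split; apply Rmult_lt_reg_r with s; auto; unfold Rdiv;
      rewrite Rmult_assoc, Rinv_l by lra; nra. }
  rewrite acos_asin, asin_atan by lra.
  assert (E : 1 - (a/s)² = (b/s)²) by (unfold Rsqr; field_simplify_eq; [nra|lra]).
  rewrite E, sqrt_Rsqr by (left; apply Rdiv_lt_0_compat; lra).
  f_equal. f_equal. field. split; lra.
Qed.

Lemma Carg_Im_pos w : 0 < Im w -> Carg w = PI/2 - atan (Re w / Im w).
Proof.
  intros H. unfold Carg. destruct (Rle_dec 0 (Im w)); [|lra].
  now apply acos_div_Cmod.
Qed.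

Lemma Carg_Im_neg w : Im w < 0 -> Carg w = atan (Re w / - Im w) - PI/2.
Proof.
  intros H. unfold Carg. destruct (Rle_dec 0 (Im w)); [lra|].
  replace (Cmod w) with (sqrt (Re w ^ 2 + (- Im w) ^ 2)) by (unfold Cmod, Re, Im; f_equal; ring).
  rewrite acos_div_Cmod by lra. ring.
Qed.

Section UpperHalfPlane.

Variable y : R.
Hypothesis Hy : 0 < y.

Lemma Carg_upper p : Carg (p, y) = PI/2 - atan (p / y).
Proof. now apply Carg_Im_pos. Qed.

Lemma Carg_upper_bound p : 0 <= Carg (p, y) <= PI.
Proof. rewrite Carg_upper. pose proof (atan_bound (p / y)). lra. Qed.

Lemma Carg_upper_antitone p q : p <= q -> Carg (q, y) <= Carg (p, y).
Proof.
  intros Hpq. rewrite !Carg_upper.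
  enough (atan (p / y) <= atan (q / y)) by lra.
  apply atan_le. apply Rmult_le_compat_r; [left; apply Rinv_0_lt_compat|]; lra.
Qed.

Lemma Carg_upper_le_div p : 0 < p -> Carg (p, y) <= y / p.
Proof.
  intros Hp. rewrite Carg_upper.
  replace (p / y) with (/ (y / p)) by (field; lra).
  rewrite atan_inv by (apply Rdiv_lt_0_compat; lra).
  ring_simplify. apply atan_le_id. left; apply Rdiv_lt_0_compat; lra.
Qed.

Lemma Carg_upper_ge_PI_sub p : p < 0 -> PI - y / - p <= Carg (p, y).
Proof.
  intros Hp. rewrite Carg_upper.
  replace (p / y) with (- / (y / - p)) by (field; lra).
  rewrite atan_opp, atan_inv by (apply Rdiv_lt_0_compat; lra).
  pose proof (atan_le_id (y / - p) ltac:(left; apply Rdiv_lt_0_compat; lra)).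
  lra.
Qed.

End UpperHalfPlane.

Lemma Carg_sub_le x1 x2 y : 0 < y -> 0 < x1 <= x2 -> Rabs (Carg (x1, y) - Carg (x2, y)) <= y / x1.
Proof.
  intros Hy Hx. pose proof (Carg_upper_antitone y Hy x1 x2 (proj2 Hx)).
  pose proof (Carg_upper_le_div y Hy x1 (proj1 Hx)). pose proof (Carg_upper_bound y Hy x2).
  apply Rabs_le. lra.
Qed.

(* No [2 PI] correction is needed: for [Im z > 0] all three arguments lie in [(0, PI)]. *)
Lemma Carg_one_sub_div x y u : 0 < y -> 0 < u ->
  Carg (1 - RtoC u / (x, y))%C = Carg (x - u, y) - Carg (x, y).
Proof.
  intros Hy Hu.
  assert (Hn : 0 < x*x + y*y) by nra.
  assert (Him : 0 < Im (1 - RtoC u / (x, y))%C)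
    by (cbn; field_simplify; [apply Rdiv_lt_0_compat|]; nra).
  assert (E : Re (1 - RtoC u / (x, y))%C / Im (1 - RtoC u / (x, y))%C
              = (1 + x / y * ((x - u) / y)) / (x / y - (x - u) / y)) by (cbn; field; nra).
  assert (Hlt : (x - u) / y < x / y) by (apply Rmult_lt_compat_r; [apply Rinv_0_lt_compat|]; lra).
  rewrite Carg_Im_pos, E, <- atan_sub_atan by assumption.
  rewrite !Carg_upper by assumption. lra.
Qed.

Lemma Carg_one_sub_mul x y u : 0 < y -> 0 < u ->
  Carg (1 - RtoC (/ u) * (x, y))%C = Carg (x - u, y) - PI.
Proof.
  intros Hy Hu.
  assert (Him : Im (1 - RtoC (/ u) * (x, y))%C < 0)
    by (cbn; pose proof (Rinv_0_lt_compat u Hu); nra).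
  assert (E : Re (1 - RtoC (/ u) * (x, y))%C / - Im (1 - RtoC (/ u) * (x, y))%C = - ((x - u) / y))
    by (cbn; field; lra).
  rewrite Carg_Im_neg, E, atan_opp, Carg_upper by assumption.
  lra.
Qed.

(** * The view angle of a horizontal segment *)

(* The angle under which the horizontal segment [x1 + iy, x2 + iy] is seen from the real point u. *)
Definition view_angle (x1 x2 y u : R) : R := Carg (x1 - u, y) - Carg (x2 - u, y).

Section ViewAngle.

Variables x1 x2 y : R.
Hypothesis Hy : 0 < y.
Hypothesis Hx12 : x1 <= x2.

Lemma view_angle_ge0 u : 0 <= view_angle x1 x2 y u.
Proof.
  unfold view_angle. pose proof (Carg_upper_antitone y Hy (x1 - u) (x2 - u)). lra.
Qed.

Lemma view_angle_le_left u : u < x1 -> view_angle x1 x2 y u <= y / (x1 - u).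
Proof.
  intros Hu. unfold view_angle.
  pose proof (Carg_upper_le_div y Hy (x1 - u)). pose proof (Carg_upper_bound y Hy (x2 - u)).
  lra.
Qed.

Lemma view_angle_le_right u : x2 < u -> view_angle x1 x2 y u <= y / (u - x2).
Proof.
  intros Hu. unfold view_angle.
  pose proof (Carg_upper_ge_PI_sub y Hy (x2 - u)). pose proof (Carg_upper_bound y Hy (x1 - u)).
  replace (- (x2 - u)) with (u - x2) in * by ring. lra.
Qed.

Lemma view_angle_ge_between u : x1 < u < x2 ->
  PI - y / (u - x1) - y / (x2 - u) <= view_angle x1 x2 y u.
Proof.
  intros Hu. unfold view_angle.
  pose proof (Carg_upper_ge_PI_sub y Hy (x1 - u)). pose proof (Carg_upper_le_div y Hy (x2 - u)).
  replace (- (x1 - u)) with (u - x1) in * by ring. lra.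
Qed.

End ViewAngle.

Lemma continuous_Carg_sub_exp x y M : 0 < y -> continuous (fun M => Carg (x - exp M, y)) M.
Proof.
  intros Hy. apply continuous_ext with (fun M => PI/2 - atan ((x - exp M) / y)).
  - intros t. symmetry. now apply Carg_upper.
  - apply (ex_derive_continuous (K := R_AbsRing) (V := R_NormedModule)). auto_derive. lra.
Qed.

Lemma continuous_view_angle_exp x1 x2 y M : 0 < y ->
  continuous (fun M => view_angle x1 x2 y (exp M)) M.
Proof.
  intros Hy. apply (continuous_minus (V := R_NormedModule)); now apply continuous_Carg_sub_exp.
Qed.

(** * Integrals of functions that are regular off a finite set *)

Definition avoids (l : list R) (p q : R) : Prop := forall x, p < x < q -> ~ In x l.

Lemma avoids_cons_outside c l p q : (c <= p \/ q <= c) -> avoids l p q -> avoids (c :: l) p q.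
Proof. intros Hc H x Hx [<- | Hin]; [lra | exact (H x Hx Hin)]. Qed.

Lemma ex_RInt_avoiding (f : R -> R) (l : list R) a b : a <= b ->
  (forall p q, a <= p -> p < q -> q <= b -> avoids l p q -> ex_RInt f p q) ->
  ex_RInt f a b.
Proof.
  revert a b. induction l as [|c l IH]; intros a b Hab Hf.
  - destruct Hab as [Hab | <-]; [|apply ex_RInt_point].
    apply Hf; try lra. intros x _ [].
  - destruct (Rlt_le_dec a c) as [Hac | Hca]; [destruct (Rlt_le_dec c b) as [Hcb | Hbc] |].
    + apply ex_RInt_Chasles with c; apply IH; try lra;
        intros p q Hp Hpq Hq Hl; apply Hf; try lra; apply avoids_cons_outside; auto; lra.
    + apply IH; auto. intros p q Hp Hpq Hq Hl.
      apply Hf; try lra; apply avoids_cons_outside; auto; lra.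
    + apply IH; auto. intros p q Hp Hpq Hq Hl.
      apply Hf; try lra; apply avoids_cons_outside; auto; lra.
Qed.

Lemma RInt_le_except (f g : R -> R) (l : list R) a b : a <= b ->
  ex_RInt f a b -> ex_RInt g a b ->
  (forall x, a < x < b -> ~ In x l -> f x <= g x) -> RInt f a b <= RInt g a b.
Proof.
  revert a b. induction l as [|c l IH]; intros a b Hab Hf Hg H.
  - apply RInt_le; auto.
  - assert (H' : forall a' b', a <= a' -> b' <= b -> (c <= a' \/ b' <= c) ->
        forall x, a' < x < b' -> ~ In x l -> f x <= g x).
    { intros a' b' Ha Hb Hc x Hx Hn. apply H; [lra|]. intros [<- | Hin]; [lra | auto]. }
    destruct (Rlt_le_dec a c) as [Hac | Hca]; [destruct (Rlt_le_dec c b) as [Hcb | Hbc] |].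
    + assert (Hacb : a <= c <= b) by lra.
      pose proof (ex_RInt_Chasles_1 (V := R_CompleteNormedModule) f a c b Hacb Hf).
      pose proof (ex_RInt_Chasles_2 (V := R_CompleteNormedModule) f a c b Hacb Hf).
      pose proof (ex_RInt_Chasles_1 (V := R_CompleteNormedModule) g a c b Hacb Hg).
      pose proof (ex_RInt_Chasles_2 (V := R_CompleteNormedModule) g a c b Hacb Hg).
      rewrite <- (RInt_Chasles f a c b), <- (RInt_Chasles g a c b) by auto.
      apply Rplus_le_compat; apply IH; auto; try lra; apply H'; lra.
    + apply IH; auto. apply H'; lra.
    + apply IH; auto. apply H'; lra.
Qed.

Lemma RInt_const_le_except (f : R -> R) (l : list R) c a b : a <= b -> ex_RInt f a b ->
  (forall x, a < x < b -> ~ In x l -> c <= f x) -> c * (b - a) <= RInt f a b.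
Proof.
  intros Hab Hf H.
  replace (c * (b - a)) with (RInt (fun _ => c) a b)
    by (rewrite RInt_const; unfold scal; simpl; unfold mult; simpl; ring).
  apply RInt_le_except with l; auto. apply ex_RInt_const.
Qed.

Lemma RInt_le_const_except (f : R -> R) (l : list R) c a b : a <= b -> ex_RInt f a b ->
  (forall x, a < x < b -> ~ In x l -> f x <= c) -> RInt f a b <= c * (b - a).
Proof.
  intros Hab Hf H.
  replace (c * (b - a)) with (RInt (fun _ => c) a b)
    by (rewrite RInt_const; unfold scal; simpl; unfold mult; simpl; ring).
  apply RInt_le_except with l; auto. apply ex_RInt_const.
Qed.

Lemma RInt_Chasles3 (f : R -> R) a b c d : ex_RInt f a b -> ex_RInt f b c -> ex_RInt f c d ->
  RInt f a d = RInt f a b + RInt f b c + RInt f c d.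
Proof.
  intros H1 H2 H3.
  rewrite <- (RInt_Chasles f a c d), <- (RInt_Chasles f a b c); eauto using ex_RInt_Chasles.
Qed.

Lemma RInt_mul_sub (w f g : R -> R) a b :
  ex_RInt (fun M => w M * f M) a b -> ex_RInt (fun M => w M * g M) a b ->
  RInt (fun M => w M * (f M - g M)) a b
  = RInt (fun M => w M * f M) a b - RInt (fun M => w M * g M) a b.
Proof.
  intros Hf Hg. rewrite <- (RInt_minus (V := R_CompleteNormedModule)) by assumption.
  apply RInt_ext. intros M _. cbn. unfold minus, plus, opp; cbn. ring.
Qed.

Lemma RInt_mul_const (w : R -> R) c a b : ex_RInt w a b ->
  RInt (fun M => w M * c) a b = RInt w a b * c.
Proof.
  intros Hw. rewrite Rmult_comm, <- (RInt_scal (V := R_CompleteNormedModule)) by assumption.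
  apply RInt_ext. intros M _. cbn. unfold scal; cbn. unfold mult; cbn. ring.
Qed.

(* The middle third of [a, b] contributes about [kappa * PI] per unit length, since there
   [view_angle] is close to [PI]; elsewhere the integrand is nonnegative. *)
Lemma RInt_view_angle_ge (w : R -> R) (l : list R) p q a b kappa :
  p <= a -> a < b -> b <= q -> 0 <= kappa ->
  (forall M, p < M < q -> ~ In M l -> 0 <= w M) -> (forall M, a < M < b -> kappa <= w M) ->
  exists C, forall y, 0 < y ->
    (forall c d, p <= c -> c <= d -> d <= q ->
       ex_RInt (fun M => w M * view_angle (exp a) (exp b) y (exp M)) c d) ->
    kappa * PI * (b - a) / 3 - y * C
      <= RInt (fun M => w M * view_angle (exp a) (exp b) y (exp M)) p q.
Proof.
  intros Hpa Hab Hbq Hk Hw0 Hwk.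
  set (a2 := a + (b - a) / 3). set (a3 := a + 2 * (b - a) / 3).
  assert (H2 : exp a < exp a2) by (apply exp_increasing; unfold a2; lra).
  assert (H3 : exp a3 < exp b) by (apply exp_increasing; unfold a3; lra).
  exists (kappa * (/ (exp a2 - exp a) + / (exp b - exp a3)) * ((b - a) / 3)).
  intros y Hy Hint.
  set (G := fun M => w M * view_angle (exp a) (exp b) y (exp M)).
  assert (Hx12 : exp a <= exp b) by (apply exp_le; lra).
  assert (HG0 : forall M, p < M < q -> ~ In M l -> 0 <= G M).
  { intros M HM Hl. unfold G.
    apply Rmult_le_pos; [now apply Hw0 | now apply view_angle_ge0]. }
  rewrite (RInt_Chasles3 G p a2 a3 q) by (apply Hint; unfold a2, a3; lra).
  assert (Hl : 0 * (a2 - p) <= RInt G p a2).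
  { apply RInt_const_le_except with l; [unfold a2; lra | apply Hint; unfold a2; lra |].
    intros M HM Hn. specialize (HG0 M ltac:(unfold a2 in HM; lra) Hn). lra. }
  assert (Hr : 0 * (q - a3) <= RInt G a3 q).
  { apply RInt_const_le_except with l; [unfold a3; lra | apply Hint; unfold a3; lra |].
    intros M HM Hn. specialize (HG0 M ltac:(unfold a3 in HM; lra) Hn). lra. }
  assert (Hm : kappa * (PI - y * (/ (exp a2 - exp a) + / (exp b - exp a3))) * (a3 - a2)
               <= RInt G a2 a3).
  { apply RInt_const_le_except with (@nil R);
      [unfold a2, a3; lra | apply Hint; unfold a2, a3; lra |].
    intros M HM _. unfold G.
    assert (HM2 : exp a2 <= exp M) by (apply exp_le; lra).
    assert (HM3 : exp M <= exp a3) by (apply exp_le; lra).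
    pose proof (view_angle_ge_between (exp a) (exp b) y Hy (exp M) ltac:(lra)) as Hv.
    assert (y / (exp M - exp a) <= y * / (exp a2 - exp a)).
    { apply Rmult_le_compat_l; [lra|]. apply Rinv_le_contravar; lra. }
    assert (y / (exp b - exp M) <= y * / (exp b - exp a3)).
    { apply Rmult_le_compat_l; [lra|]. apply Rinv_le_contravar; lra. }
    pose proof (view_angle_ge0 (exp a) (exp b) y Hy Hx12 (exp M)).
    assert (kappa <= w M) by (apply Hwk; unfold a2, a3 in HM; lra).
    nra. }
  replace (a3 - a2) with ((b - a) / 3) in Hm by (unfold a2, a3; field).
  lra.
Qed.

(** * Complex integrals and horizontal derivatives *)

Lemma Im_sub (a b : C) : Im (a - b)%C = Im a - Im b.
Proof. destruct a, b. cbn. ring. Qed.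

Lemma Im_RInt (f : R -> C) a b :
  ex_RInt (fun t => Re (f t)) a b -> ex_RInt (fun t => Im (f t)) a b ->
  Im (@RInt C_R_CompleteNormedModule f a b) = RInt (fun t => Im (f t)) a b.
Proof.
  intros [l1 H1] [l2 H2].
  assert (H : is_RInt (V := C_R_NormedModule) f a b (l1, l2))
    by now apply (@is_RInt_fct_extend_pair R_NormedModule R_NormedModule).
  rewrite (is_RInt_unique (V := C_R_CompleteNormedModule) f a b (l1, l2) H).
  symmetry. now apply is_RInt_unique.
Qed.

Lemma Im_RInt_Cln (w : R -> R) (v : R -> C) (g : R -> R) a b :
  (forall M, Carg (v M) = g M) ->
  ex_RInt (fun M => w M * ln (Cmod (v M))) a b -> ex_RInt (fun M => w M * g M) a b ->
  Im (@RInt C_R_CompleteNormedModule (fun M => (RtoC (w M) * Cln (v M))%C) a b)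
  = RInt (fun M => w M * g M) a b.
Proof.
  intros Hg Hre Him.
  assert (E : forall M, Im (RtoC (w M) * Cln (v M))%C = w M * g M)
    by (intros M; rewrite im_scal_l, <- Hg; reflexivity).
  rewrite Im_RInt.
  - now apply RInt_ext.
  - apply ex_RInt_ext with (fun M => w M * ln (Cmod (v M))); auto.
    intros M _. rewrite re_scal_l. reflexivity.
  - apply ex_RInt_ext with (fun M => w M * g M); auto.
Qed.

Lemma continuous_ln_Cmod (w : R -> C) M :
  continuous (fun t => Re (w t)) M -> continuous (fun t => Im (w t)) M -> Im (w M) <> 0 ->
  continuous (fun t => ln (Cmod (w t))) M.
Proof.
  intros Hre Him Hw.
  apply (continuous_comp (fun t => Cmod (w t)) ln).
  - apply continuous_sqrt_comp.
    apply (continuous_plus (V := R_NormedModule)); apply (continuous_mult (K := R_AbsRing));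
      auto; apply (continuous_mult (K := R_AbsRing)); auto; apply continuous_const.
  - apply continuous_ln, Cmod_gt_0. intros E. apply Hw. now rewrite E.
Qed.

Lemma Im_le_Cmod c : Rabs (Im c) <= Cmod c.
Proof.
  destruct c as [a b]. unfold Cmod; simpl. rewrite <- sqrt_Rsqr_abs.
  apply sqrt_le_1_alt. unfold Rsqr. nra.
Qed.

Lemma Cmod_lt_of_ball (w : C) e : ball (RtoC 0) e w -> Cmod w < 2 * e.
Proof.
  destruct w as [p q]. intros [Hp Hq]. cbn in Hp, Hq.
  unfold AbsRing_ball, abs, minus, plus, opp in Hp, Hq; cbn in Hp, Hq.
  rewrite Ropp_0, Rplus_0_r in Hp, Hq.
  eapply Rle_lt_trans; [apply Cmod_2Rmax|]. cbn.
  assert (Hs : sqrt 2 < 2).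
  { rewrite <- (sqrt_square 2) at 2 by lra. apply sqrt_lt_1_alt. lra. }
  assert (0 <= Rmax (Rabs p) (Rabs q) < e).
  { split; [apply (Rle_trans _ _ _ (Rabs_pos p) (Rmax_l _ _)) | now apply Rmax_lub_lt]. }
  pose proof (sqrt_pos 2). nra.
Qed.

Lemma is_derive_Im_horizontal (f : C -> C) (x y : R) (l : C) :
  is_derive f (x, y) l -> is_derive (fun t : R => Im (f (t, y))) x (Im l).
Proof.
  intros [_ H]. split; [apply is_linear_scal_l|].
  intros x' Hx'.
  apply (is_filter_lim_locally_unique (K := R_AbsRing) (V := R_NormedModule)) in Hx'. subst x'.
  intros eps. destruct (H (x, y) (fun P HP => HP) eps) as [d Hd].
  exists d. intros t Ht. cbn in Ht |- *.
  unfold AbsRing_ball, abs, minus, plus, opp, norm, scal, mult in *; cbn in *.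
  assert (EC : Cmod ((t, y) + - (x, y))%C = Rabs (t + - x)).
  { unfold Cmod; cbn. rewrite <- sqrt_Rsqr_abs. f_equal. unfold Rsqr. ring. }
  assert (Hb : AbsRing_ball C_AbsRing (x, y) d (t, y))
    by (change (Cmod ((t, y) + - (x, y))%C < d); now rewrite EC).
  specialize (Hd (t, y) Hb).
  rewrite EC in Hd. eapply Rle_trans; [|exact Hd].
  eapply Rle_trans; [|apply Im_le_Cmod]. right. f_equal.
  destruct (f (t, y)), (f (x, y)), l. cbn. ring.
Qed.

Lemma Im_increment_le (f Sp : C -> C) y t1 t2 B :
  y <> 0 -> (forall z : C, Im z <> 0 -> is_derive f z (Sp z)) -> t1 < t2 ->
  (forall t, t1 <= t <= t2 -> Rabs (Im (Sp (t, y))) <= B) ->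
  Rabs (Im (f (t2, y)) - Im (f (t1, y))) <= B * (t2 - t1).
Proof.
  intros Hy HD H12 HB.
  assert (Hder : forall t, is_derive (fun t => Im (f (t, y))) t (Im (Sp (t, y))))
    by (intros t; apply is_derive_Im_horizontal, HD; exact Hy).
  destruct (MVT_gen (fun t => Im (f (t, y))) t1 t2 (fun t => Im (Sp (t, y)))) as [c [Hc ->]].
  - intros x _. apply Hder.
  - intros x _. apply continuity_pt_filterlim.
    apply (ex_derive_continuous (K := R_AbsRing) (V := R_NormedModule)). eexists. apply Hder.
  - rewrite Rmin_left, Rmax_right in Hc by lra.
    rewrite Rabs_mult, (Rabs_pos_eq (t2 - t1)) by lra.
    apply Rmult_le_compat_r; [lra | apply HB; lra].
Qed.

(* Near [z0 > 0] the bound [|z S'(z)| < eps] gives [|S'(z)| < 4 eps / z0], and the mean value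
   theorem along horizontal segments turns this into a Lipschitz bound for [Im S]. *)
Lemma Im_horizontal_Lipschitz (f Sp : C -> C) (z0 : R) : 0 < z0 ->
  (forall z : C, Im z <> 0 -> is_derive f z (Sp z)) ->
  filterlim (fun z : C => (z * Sp z)%C)
    (within (fun z : C => Im z <> 0) (locally (RtoC z0))) (locally (RtoC 0)) ->
  forall c, 0 < c -> exists del, 0 < del /\
    forall y t1 t2, 0 < y < del -> z0 - del < t1 -> t1 < t2 -> t2 < z0 + del ->
      Rabs (Im (f (t2, y)) - Im (f (t1, y))) <= c * (t2 - t1).
Proof.
  intros Hz0 HD HL c Hc.
  assert (Heps : 0 < c * z0 / 4) by (apply Rdiv_lt_0_compat; nra).
  destruct (HL _ (locally_ball _ (mkposreal _ Heps))) as [d Hd]. cbn in Hd.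
  exists (Rmin d (z0 / 2)). split; [apply Rmin_glb_lt; [apply cond_pos | lra]|].
  pose proof (Rmin_l d (z0 / 2)); pose proof (Rmin_r d (z0 / 2)).
  intros y t1 t2 Hy H1 H12 H2.
  apply Im_increment_le with Sp; auto; [lra|].
  intros t Ht.
  assert (Hball : ball (RtoC z0) d (t, y)).
  { split; cbn; unfold AbsRing_ball, abs, minus, plus, opp; cbn; apply Rabs_def1; lra. }
  pose proof (Cmod_lt_of_ball _ _ (Hd (t, y) Hball ltac:(cbn; lra))) as Hm.
  rewrite Cmod_mult in Hm.
  assert (Ht0 : z0 / 2 <= Cmod (t, y))
    by (eapply Rle_trans; [|apply re_le_Cmod]; cbn; rewrite Rabs_pos_eq; lra).
  pose proof (Cmod_ge_0 (Sp (t, y))).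
  eapply Rle_trans; [apply Im_le_Cmod|].
  apply Rmult_le_reg_l with (z0 / 2); [lra|].
  replace (z0 / 2 * c) with (2 * (c * z0 / 4)) by field.
  nra.
Qed.

(** * The imaginary part of S for a piecewise linear V *)

Definition weight_below (Vf : R -> R) (M : R) : R := /2 * (1 + Derive Vf M).

Definition weight_above (Vf : R -> R) (M : R) : R := /2 * (1 - Derive Vf M).

Section PiecewiseLinear.

Variables (n : nat) (Vs beta : nat -> R) (Vf : R -> R).
Hypothesis HVs : forall k : nat, (k < n)%nat -> Vs k < Vs (S k).
Hypothesis Hbeta_range : forall k : nat, (1 <= k <= n)%nat -> -1 <= beta k <= 1.
Hypothesis HVf : forall k : nat, (1 <= k <= n)%nat ->
  forall M : R, Vs (pred k) <= M <= Vs k -> Vf M = Vf (Vs (pred k)) + beta k * (M - Vs (pred k)).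

Lemma Vs_le a b : (a <= b)%nat -> (b <= n)%nat -> Vs a <= Vs b.
Proof.
  intros Hab Hb. induction b as [|b IH].
  - replace a with 0%nat by lia. lra.
  - destruct (Nat.eq_dec a (S b)) as [-> | Hne]; [lra|].
    pose proof (IH ltac:(lia) ltac:(lia)). pose proof (HVs b ltac:(lia)). lra.
Qed.

Definition breakpoints : list R := map Vs (seq 0 (S n)).

Lemma In_breakpoints k : (k <= n)%nat -> In (Vs k) breakpoints.
Proof. intros. apply in_map, in_seq. lia. Qed.

Lemma segment_of_point M : Vs 0%nat < M < Vs n -> ~ In M breakpoints ->
  exists k, (1 <= k <= n)%nat /\ Vs (pred k) < M < Vs k.
Proof.
  intros HM Hnot.
  enough (forall m, (m <= n)%nat -> M < Vs m ->
            exists k, (1 <= k <= m)%nat /\ Vs (pred k) < M < Vs k) as Hm.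
  { destruct (Hm n ltac:(lia) ltac:(lra)) as [k Hk]. exists k. split; [lia | tauto]. }
  induction m as [|m IH]; intros Hm HMm; [lra|].
  destruct (Rlt_le_dec M (Vs m)) as [Hlt | [Hlt | Heq]].
  - destruct (IH ltac:(lia) Hlt) as [k Hk]. exists k. split; [lia | tauto].
  - exists (S m). split; [lia | cbn; lra].
  - exfalso. apply Hnot. rewrite <- Heq. apply In_breakpoints. lia.
Qed.

Lemma segment_of_interval p q : Vs 0%nat <= p -> p < q -> q <= Vs n -> avoids breakpoints p q ->
  exists k, (1 <= k <= n)%nat /\ forall x, p < x < q -> Vs (pred k) < x < Vs k.
Proof.
  intros Hp Hpq Hq Hno.
  destruct (segment_of_point ((p + q) / 2)) as [k [Hk Hmk]];
    [lra | apply Hno; lra |].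
  exists k. split; [exact Hk|]. intros x Hx.
  assert (Hlo : Vs (pred k) <= p).
  { destruct (Rle_lt_dec (Vs (pred k)) p) as [|Hlt]; [auto|].
    exfalso. apply (Hno (Vs (pred k))); [lra | apply In_breakpoints; lia]. }
  assert (Hhi : q <= Vs k).
  { destruct (Rle_lt_dec q (Vs k)) as [|Hlt]; [auto|].
    exfalso. apply (Hno (Vs k)); [lra | apply In_breakpoints; lia]. }
  lra.
Qed.

Lemma Derive_Vf_segment k M : (1 <= k <= n)%nat -> Vs (pred k) < M < Vs k -> Derive Vf M = beta k.
Proof.
  intros Hk HM. apply is_derive_unique.
  apply is_derive_ext_loc with (fun t => Vf (Vs (pred k)) + beta k * (t - Vs (pred k))).
  - assert (Hd : 0 < Rmin (M - Vs (pred k)) (Vs k - M)) by (apply Rmin_glb_lt; lra).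
    exists (mkposreal _ Hd). intros t Ht. cbn in Ht.
    unfold AbsRing_ball, abs, minus, plus, opp in Ht; cbn in Ht.
    pose proof (Rmin_l (M - Vs (pred k)) (Vs k - M)).
    pose proof (Rmin_r (M - Vs (pred k)) (Vs k - M)).
    apply Rabs_def2 in Ht. symmetry. apply HVf; auto; lra.
  - auto_derive; auto. ring.
Qed.

Lemma Derive_Vf_bound M : Vs 0%nat < M < Vs n -> ~ In M breakpoints -> -1 <= Derive Vf M <= 1.
Proof.
  intros HM Hnot. destruct (segment_of_point M HM Hnot) as [k [Hk HMk]].
  rewrite (Derive_Vf_segment k M Hk HMk). auto.
Qed.

Lemma ex_RInt_slope_profile (phi h : R -> R) a b :
  (forall x, continuous h x) -> Vs 0%nat <= a -> a <= b -> b <= Vs n ->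
  ex_RInt (fun M => phi (Derive Vf M) * h M) a b.
Proof.
  intros Hh Ha Hab Hb.
  apply ex_RInt_avoiding with breakpoints; auto.
  intros p q Hp Hpq Hq Hno.
  destruct (segment_of_interval p q) as [k [Hk Hseg]]; auto; try lra.
  apply ex_RInt_ext with (fun M => phi (beta k) * h M).
  - intros x Hx. rewrite Rmin_left, Rmax_right in Hx by lra.
    now rewrite (Derive_Vf_segment k x Hk (Hseg x Hx)).
  - apply (ex_RInt_continuous (V := R_CompleteNormedModule)). intros x _.
    apply (continuous_mult (K := R_AbsRing)); [apply continuous_const | apply Hh].
Qed.

Lemma weights_bound M : Vs 0%nat < M < Vs n -> ~ In M breakpoints ->
  0 <= weight_below Vf M <= 1 /\ 0 <= weight_above Vf M <= 1.
Proof.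
  intros HM Hnot. pose proof (Derive_Vf_bound M HM Hnot).
  unfold weight_below, weight_above. lra.
Qed.

Lemma ex_RInt_weight_below (h : R -> R) a b :
  (forall x, continuous h x) -> Vs 0%nat <= a -> a <= b -> b <= Vs n ->
  ex_RInt (fun M => weight_below Vf M * h M) a b.
Proof. exact (ex_RInt_slope_profile (fun s => /2 * (1 + s)) h a b). Qed.

Lemma ex_RInt_weight_above (h : R -> R) a b :
  (forall x, continuous h x) -> Vs 0%nat <= a -> a <= b -> b <= Vs n ->
  ex_RInt (fun M => weight_above Vf M * h M) a b.
Proof. exact (ex_RInt_slope_profile (fun s => /2 * (1 - s)) h a b). Qed.

Lemma Im_S_fun tau chi x y : 0 < y -> Vs 0%nat <= tau <= Vs n ->
  Im (S_fun Vs n Vf tau chi (x, y)) =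
    RInt (fun M => weight_below Vf M * (Carg (x - exp M, y) - Carg (x, y))) (Vs 0%nat) tau
  - RInt (fun M => weight_above Vf M * (Carg (x - exp M, y) - PI)) tau (Vs n)
  - (chi - /2 * Vf tau) * Carg (x, y).
Proof.
  intros Hy Htau.
  assert (Hcont : forall x u, continuous (fun M => Carg (x - exp M, y)) u)
    by (intros; now apply continuous_Carg_sub_exp).
  unfold S_fun. rewrite !Im_sub. f_equal; [f_equal|].
  - apply (Im_RInt_Cln (weight_below Vf)).
    + intros M. apply Carg_one_sub_div; [exact Hy | apply exp_pos].
    + apply ex_RInt_weight_below; try lra. intros M.
      apply continuous_ln_Cmod.
      * unfold Re. cbn. apply (ex_derive_continuous (K := R_AbsRing) (V := R_NormedModule)).
        now auto_derive.
      * unfold Im. cbn. apply (ex_derive_continuous (K := R_AbsRing) (V := R_NormedModule)).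
        now auto_derive.
      * cbn. pose proof (exp_pos M).
        match goal with |- ?e <> 0 => replace e with (exp M * y / (x*x + y*y)) by (field; nra) end.
        apply Rgt_not_eq, Rdiv_lt_0_compat; nra.
    + apply ex_RInt_weight_below; try lra. intros M.
      apply (continuous_minus (V := R_NormedModule)); [apply Hcont | apply continuous_const].
  - apply (Im_RInt_Cln (weight_above Vf)).
    + intros M. rewrite exp_Ropp. apply Carg_one_sub_mul; [exact Hy | apply exp_pos].
    + apply ex_RInt_weight_above; try lra. intros M.
      apply continuous_ln_Cmod.
      * unfold Re. cbn. apply (ex_derive_continuous (K := R_AbsRing) (V := R_NormedModule)).
        now auto_derive.
      * unfold Im. cbn. apply (ex_derive_continuous (K := R_AbsRing) (V := R_NormedModule)).
        now auto_derive.
      * cbn. pose proof (exp_pos (- M)). nra.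
    + apply ex_RInt_weight_above; try lra. intros M.
      apply (continuous_minus (V := R_NormedModule)); [apply Hcont | apply continuous_const].
  - rewrite im_scal_l. reflexivity.
Qed.

Lemma Im_S_fun_sub tau chi x1 x2 y : 0 < y -> Vs 0%nat <= tau <= Vs n ->
  Im (S_fun Vs n Vf tau chi (x1, y)) - Im (S_fun Vs n Vf tau chi (x2, y)) =
    RInt (fun M => weight_below Vf M * view_angle x1 x2 y (exp M)) (Vs 0%nat) tau
  - RInt (fun M => weight_above Vf M * view_angle x1 x2 y (exp M)) tau (Vs n)
  - (Carg (x1, y) - Carg (x2, y)) * (chi - /2 * Vf tau + RInt (weight_below Vf) (Vs 0%nat) tau).
Proof.
  intros Hy Htau. rewrite !Im_S_fun by assumption.
  assert (Hcont : forall x u, continuous (fun M => Carg (x - exp M, y)) u)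
    by (intros; now apply continuous_Carg_sub_exp).
  assert (Hb : forall h, (forall u, continuous h u) ->
    ex_RInt (fun M => weight_below Vf M * h M) (Vs 0%nat) tau)
    by (intros; apply ex_RInt_weight_below; auto; lra).
  assert (Ha : forall h, (forall u, continuous h u) ->
    ex_RInt (fun M => weight_above Vf M * h M) tau (Vs n))
    by (intros; apply ex_RInt_weight_above; auto; lra).
  assert (Hw : ex_RInt (weight_below Vf) (Vs 0%nat) tau).
  { apply ex_RInt_ext with (fun M => weight_below Vf M * 1);
      [intros; apply Rmult_1_r | apply Hb; intros; apply continuous_const]. }
  assert (Hw' : ex_RInt (weight_above Vf) tau (Vs n)).
  { apply ex_RInt_ext with (fun M => weight_above Vf M * 1);
      [intros; apply Rmult_1_r | apply Ha; intros; apply continuous_const]. }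
  unfold view_angle.
  rewrite !RInt_mul_sub, !RInt_mul_const by
    (auto; (apply Hb || apply Ha); auto; intros; apply continuous_const).
  ring.
Qed.

Lemma RInt_weight_below_bound tau : Vs 0%nat <= tau <= Vs n ->
  0 <= RInt (weight_below Vf) (Vs 0%nat) tau <= tau - Vs 0%nat.
Proof.
  intros Htau.
  assert (Hw : ex_RInt (weight_below Vf) (Vs 0%nat) tau).
  { apply ex_RInt_ext with (fun M => weight_below Vf M * 1);
      [intros; apply Rmult_1_r |].
    apply ex_RInt_weight_below; try lra. intros; apply continuous_const. }
  assert (Hb : forall M, Vs 0%nat < M < tau -> ~ In M breakpoints ->
                 0 <= weight_below Vf M <= 1)
    by (intros M HM Hn; apply (weights_bound M); auto; lra).
  split.
  - replace 0 with (0 * (tau - Vs 0%nat)) by ring.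
    apply RInt_const_le_except with breakpoints; [lra | auto |].
    intros M HM Hn. apply Hb; auto.
  - rewrite <- (Rmult_1_l (tau - Vs 0%nat)).
    apply RInt_le_const_except with breakpoints; [lra | auto |].
    intros M HM Hn. apply Hb; auto.
Qed.

Lemma ex_RInt_below_view_angle x1 x2 y c d : 0 < y -> Vs 0%nat <= c -> c <= d -> d <= Vs n ->
  ex_RInt (fun M => weight_below Vf M * view_angle x1 x2 y (exp M)) c d.
Proof. intros. apply ex_RInt_weight_below; auto. intros; now apply continuous_view_angle_exp. Qed.

Lemma ex_RInt_above_view_angle x1 x2 y c d : 0 < y -> Vs 0%nat <= c -> c <= d -> d <= Vs n ->
  ex_RInt (fun M => weight_above Vf M * view_angle x1 x2 y (exp M)) c d.
Proof. intros. apply ex_RInt_weight_above; auto. intros; now apply continuous_view_angle_exp. Qed.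

Lemma Carg_gap_term_le tau chi a b y : 0 < y -> a <= b -> Vs 0%nat <= tau <= Vs n ->
  Rabs ((Carg (exp a, y) - Carg (exp b, y))
        * (chi - /2 * Vf tau + RInt (weight_below Vf) (Vs 0%nat) tau))
    <= y * ((Rabs (chi - /2 * Vf tau) + (tau - Vs 0%nat)) / exp a).
Proof.
  intros Hy Hab Htau. pose proof (exp_pos a).
  replace (y * _) with (y / exp a * (Rabs (chi - /2 * Vf tau) + (tau - Vs 0%nat))) by (field; lra).
  rewrite Rabs_mult. apply Rmult_le_compat; try apply Rabs_pos.
  - apply Carg_sub_le; auto. split; [lra | now apply exp_le].
  - pose proof (RInt_weight_below_bound tau Htau).
    eapply Rle_trans; [apply Rabs_triang|]. rewrite (Rabs_pos_eq (RInt _ _ _)); lra.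
Qed.

Lemma Im_S_fun_sub_ge tau chi a b kappa :
  Vs 0%nat <= a -> a < b -> b < tau -> tau <= Vs n -> 0 <= kappa ->
  (forall M, a < M < b -> kappa <= weight_below Vf M) ->
  exists C, forall y, 0 < y ->
    kappa * PI * (b - a) / 3 - y * C
      <= Im (S_fun Vs n Vf tau chi (exp a, y)) - Im (S_fun Vs n Vf tau chi (exp b, y)).
Proof.
  intros Ha Hab Hbt Htau Hk Hw.
  destruct (RInt_view_angle_ge (weight_below Vf) breakpoints (Vs 0%nat) tau a b kappa)
    as [C1 HC1]; auto; try lra.
  { intros M HM Hn. apply (weights_bound M); auto; lra. }
  set (K := chi - /2 * Vf tau).
  assert (Hgap : 0 < exp tau - exp b) by (pose proof (exp_increasing b tau Hbt); lra).
  exists (C1 + (Vs n - tau) / (exp tau - exp b) + (Rabs K + (tau - Vs 0%nat)) / exp a).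
  intros y Hy.
  rewrite (Im_S_fun_sub tau chi (exp a) (exp b) y) by (auto; lra).
  specialize (HC1 y Hy (fun c d Hc Hcd Hd =>
    ex_RInt_below_view_angle (exp a) (exp b) y c d Hy ltac:(lra) Hcd ltac:(lra))).
  assert (Habove :
    RInt (fun M => weight_above Vf M * view_angle (exp a) (exp b) y (exp M)) tau (Vs n)
                   <= y / (exp tau - exp b) * (Vs n - tau)).
  { apply RInt_le_const_except with breakpoints; [lra | apply ex_RInt_above_view_angle; lra |].
    intros M HM Hn.
    destruct (weights_bound M ltac:(lra) Hn) as [_ HwM].
    assert (HbM : exp b < exp M) by (apply exp_increasing; lra).
    pose proof (view_angle_le_right (exp a) (exp b) y Hy (exp M) HbM).
    pose proof (view_angle_ge0 (exp a) (exp b) y Hy ltac:(apply exp_le; lra) (exp M)).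
    assert (y / (exp M - exp b) <= y / (exp tau - exp b)).
    { apply Rmult_le_compat_l; [lra|]. apply Rinv_le_contravar; [lra|].
      pose proof (exp_le tau M ltac:(lra)). lra. }
    apply Rmult_le_unit_l; auto; lra. }
  pose proof (Carg_gap_term_le tau chi a b y Hy ltac:(lra) ltac:(lra)) as Hd.
  apply Rabs_le_between in Hd. fold K in Hd |- *.
  assert (y / (exp tau - exp b) * (Vs n - tau) = y * ((Vs n - tau) / (exp tau - exp b)))
    by (field; lra).
  lra.
Qed.

Lemma Im_S_fun_sub_le tau chi a b kappa :
  Vs 0%nat <= tau -> tau < a -> a < b -> b <= Vs n -> 0 <= kappa ->
  (forall M, a < M < b -> kappa <= weight_above Vf M) ->
  exists C, forall y, 0 < y ->
    Im (S_fun Vs n Vf tau chi (exp a, y)) - Im (S_fun Vs n Vf tau chi (exp b, y))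
      <= - (kappa * PI * (b - a) / 3) + y * C.
Proof.
  intros Htau Hta Hab Hb Hk Hw.
  destruct (RInt_view_angle_ge (weight_above Vf) breakpoints tau (Vs n) a b kappa)
    as [C1 HC1]; auto; try lra.
  { intros M HM Hn. apply (weights_bound M); auto; lra. }
  set (K := chi - /2 * Vf tau).
  assert (Hgap : 0 < exp a - exp tau) by (pose proof (exp_increasing tau a Hta); lra).
  exists (C1 + (tau - Vs 0%nat) / (exp a - exp tau) + (Rabs K + (tau - Vs 0%nat)) / exp a).
  intros y Hy.
  rewrite (Im_S_fun_sub tau chi (exp a) (exp b) y) by (auto; lra).
  specialize (HC1 y Hy (fun c d Hc Hcd Hd =>
    ex_RInt_above_view_angle (exp a) (exp b) y c d Hy ltac:(lra) Hcd ltac:(lra))).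
  assert (Hbelow :
    RInt (fun M => weight_below Vf M * view_angle (exp a) (exp b) y (exp M)) (Vs 0%nat) tau
                   <= y / (exp a - exp tau) * (tau - Vs 0%nat)).
  { apply RInt_le_const_except with breakpoints; [lra | apply ex_RInt_below_view_angle; lra |].
    intros M HM Hn.
    destruct (weights_bound M ltac:(lra) Hn) as [HwM _].
    assert (HMa : exp M < exp a) by (apply exp_increasing; lra).
    pose proof (view_angle_le_left (exp a) (exp b) y Hy (exp M) HMa).
    pose proof (view_angle_ge0 (exp a) (exp b) y Hy ltac:(apply exp_le; lra) (exp M)).
    assert (y / (exp a - exp M) <= y / (exp a - exp tau)).
    { apply Rmult_le_compat_l; [lra|]. apply Rinv_le_contravar; [lra|].
      pose proof (exp_le M tau ltac:(lra)). lra. }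
    apply Rmult_le_unit_l; auto; lra. }
  pose proof (Carg_gap_term_le tau chi a b y Hy ltac:(lra) ltac:(lra)) as Hd.
  apply Rabs_le_between in Hd. fold K in Hd |- *.
  assert (y / (exp a - exp tau) * (tau - Vs 0%nat) = y * ((tau - Vs 0%nat) / (exp a - exp tau)))
    by (field; lra).
  lra.
Qed.

(* On [(Vs (pred i), Vs i)] the slope is [beta i], so whichever side of [tau] this segment lies on,
   its weight is at least [kappa]. *)
Lemma Im_S_fun_jump tau chi i j a b kappa eta :
  (1 <= j <= n)%nat -> Vs (pred j) < tau < Vs j -> (1 <= i <= n)%nat -> i <> j ->
  Vs (pred i) <= a -> a < b -> b <= Vs i ->
  0 < kappa -> kappa <= /2 * (1 + beta i) -> kappa <= /2 * (1 - beta i) -> 0 < eta ->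
  exists y, 0 < y < eta /\
    kappa * PI * (b - a) / 6
      <= Rabs (Im (S_fun Vs n Vf tau chi (exp a, y)) - Im (S_fun Vs n Vf tau chi (exp b, y))).
Proof.
  intros Hj Htau Hi Hij Ha Hab Hb Hk Hk1 Hk2 Heta.
  assert (HD : forall M, a < M < b -> Derive Vf M = beta i)
    by (intros M HM; apply Derive_Vf_segment; auto; lra).
  assert (H0 : Vs 0%nat <= Vs (pred i)) by (apply Vs_le; lia).
  assert (Hn : Vs i <= Vs n) by (apply Vs_le; lia).
  assert (Hj0 : Vs 0%nat <= Vs (pred j)) by (apply Vs_le; lia).
  assert (Hjn : Vs j <= Vs n) by (apply Vs_le; lia).
  assert (Hjump : exists C, forall y, 0 < y -> kappa * PI * (b - a) / 3 - y * C
    <= Rabs (Im (S_fun Vs n Vf tau chi (exp a, y)) - Im (S_fun Vs n Vf tau chi (exp b, y)))).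
  { destruct (proj1 (Nat.lt_gt_cases i j) Hij) as [Hlt | Hgt].
    - assert (Vs i <= Vs (pred j)) by (apply Vs_le; lia).
      destruct (Im_S_fun_sub_ge tau chi a b kappa) as [C HC]; try lra.
      { intros M HM. unfold weight_below. rewrite HD by exact HM. lra. }
      exists C. intros y Hy. eapply Rle_trans; [exact (HC y Hy) | apply Rle_abs].
    - assert (Vs j <= Vs (pred i)) by (apply Vs_le; lia).
      destruct (Im_S_fun_sub_le tau chi a b kappa) as [C HC]; try lra.
      { intros M HM. unfold weight_above. rewrite HD by exact HM. lra. }
      exists C. intros y Hy. specialize (HC y Hy).
      rewrite <- Rabs_Ropp. eapply Rle_trans; [|apply Rle_abs]. lra. }
  destruct Hjump as [C HC].
  assert (Hpos : 0 < kappa * PI * (b - a) / 6)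
    by (pose proof PI_RGT_0; apply Rdiv_lt_0_compat; [apply Rmult_lt_0_compat; [nra | lra] | lra]).
  destruct (small_pos_exists eta _ C Heta Hpos) as [y [Hy HyC]].
  exists y. split; [exact Hy|]. specialize (HC y (proj1 Hy)). lra.
Qed.

End PiecewiseLinear.

Theorem lemma2p1
  (n : nat) (Vs : nat -> R) (beta : nat -> R) (Vf : R -> R)
  (HVs : forall k : nat, (k < n)%nat -> Vs k < Vs (S k))
  (Hbeta_range : forall k : nat, (1 <= k <= n)%nat -> -1 <= beta k <= 1)
  (Hbeta0 : beta 0%nat = -1)
  (Hbeta_last : beta (S n) = 1)
  (Hbeta_jump : forall k : nat, (k <= n)%nat -> beta k <> beta (S k))
  (HVf : forall k : nat, (1 <= k <= n)%nat ->
         forall M : R, Vs (pred k) <= M <= Vs k ->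
         Vf M = Vf (Vs (pred k)) + beta k * (M - Vs (pred k)))
  (j : nat) (Hj : (1 <= j <= n)%nat)
  (tau : R) (Htau : Vs (pred j) < tau < Vs j)
  (chi : R)
  (i : nat) (Hi : (1 <= i <= n)%nat) (Hij : i <> j)
  (Hbi : beta i <> 1 /\ beta i <> -1) :
  ~ exists z0 : R,
      exp (Vs (pred i)) <= z0 <= exp (Vs i) /\
      exists Sp : C -> C,
        (forall z : C, Im z <> 0 -> is_derive (S_fun Vs n Vf tau chi) z (Sp z)) /\
        filterlim (fun z : C => (z * Sp z)%C)
                  (within (fun z : C => Im z <> 0) (locally (RtoC z0)))
                  (locally (RtoC 0)).
Proof.
  intros [z0 [Hz0 [Sp [HD HL]]]].
  assert (Hb : -1 < beta i < 1).
  { destruct Hbi as [H1 H2]. destruct (Hbeta_range i Hi) as [[Hl | Hl] [Hu | Hu]];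
      split; auto; congruence. }
  set (kappa := Rmin (/2 * (1 + beta i)) (/2 * (1 - beta i))).
  assert (Hk : 0 < kappa) by (apply Rmin_glb_lt; lra).
  assert (Hk1 : kappa <= /2 * (1 + beta i)) by apply Rmin_l.
  assert (Hk2 : kappa <= /2 * (1 - beta i)) by apply Rmin_r.
  assert (Hi0 : Vs (pred i) < Vs i) by (replace i with (S (pred i)) at 2 by lia; apply HVs; lia).
  assert (Hin : Vs i <= Vs n) by (apply (Vs_le n Vs HVs); lia).
  pose proof PI_RGT_0. pose proof (exp_pos (Vs n)). pose proof (exp_pos (Vs (pred i))).
  (* A Lipschitz constant small enough to contradict the jump of [Im S] over [exp lo, exp hi]. *)
  set (c := kappa * PI / (12 * exp (Vs n))).
  destruct (Im_horizontal_Lipschitz _ Sp z0 ltac:(lra) HD HL c) as [del [Hdel Hlip]].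
  { apply Rdiv_lt_0_compat; nra. }
  destruct (log_interval_near (Vs (pred i)) (Vs i) z0 del Hi0 Hz0 Hdel)
    as [lo [hi [Hlo [Hlohi [Hhi [Hzlo Hzhi]]]]]].
  destruct (Im_S_fun_jump n Vs beta Vf HVs Hbeta_range HVf tau chi i j lo hi kappa del)
    as [y [Hy Hjump]]; [auto; lra .. |].
  specialize (Hlip y (exp lo) (exp hi) Hy Hzlo (exp_increasing lo hi Hlohi) Hzhi).
  rewrite Rabs_minus_sym in Hlip.
  pose proof (exp_sub_le lo hi (Vs n) ltac:(lra)).
  assert (c * (exp hi - exp lo) <= kappa * PI * (hi - lo) / 12).
  { replace (kappa * PI * (hi - lo) / 12) with (c * (exp (Vs n) * (hi - lo)))
      by (unfold c; field; lra).
    apply Rmult_le_compat_l; [apply Rlt_le, Rdiv_lt_0_compat; nra | assumption]. }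
  assert (0 < kappa * PI * (hi - lo)) by (apply Rmult_lt_0_compat; nra).
  lra.
Qed.
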